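(* $MCF(G,\sigma)\subseteq MA(G,\sigma)$, and $$MCF(G,\sigma)=\{\varphi\in MA(G,\sigma)\mid M_\varphi(C^*_r(G,\sigma))\subseteq CF(G,\sigma)\}.$$ Moreover, if $\varphi\in MCF(G,\sigma)$, then for every $x\in C^*_r(G,\sigma)$ the series $\sum_{g\in G}\varphi(g)\widehat x(g)\Lambda_\sigma(g)$ converges to $M_\varphi(x)$ in operator norm.
   Context: $G$ is a discrete group, $\sigma:G\times G\to\mathbb{T}$ a normalized 2-cocycle ($\sigma(g,h)\sigma(gh,k)=\sigma(h,k)\sigma(g,hk)$, $\sigma(g,e)=\sigma(e,g)=1$); $\Lambda_\sigma(g)$ is the unitary on $\ell^2(G)$ with $(\Lambda_\sigma(g)\xi)(h)=\sigma(g,g^{-1}h)\xi(g^{-1}h)$; $C^*_r(G,\sigma)$ is the operator-norm closure of $\mathbb{C}(G,\sigma)=\mathrm{span}\,\Lambda_\sigma(G)$. For $x\in C^*_r(G,\sigma)$, $\widehat x=x\delta_e\in\ell^2(G)$, and its Fourier series is $\sum_g\widehat x(g)\Lambda_\sigma(g)$ (series over $G$ converge as nets of finite partial sums); $CF(G,\sigma)$ is the set of $x\in C^*_r(G,\sigma)$ whose Fourier series converges in operator norm. For $\varphi:G\to\mathbb{C}$, $M_\varphi$ is the linear map on $\mathbb{C}(G,\sigma)$ with $M_\varphi(\Lambda_\sigma(g))=\varphi(g)\Lambda_\sigma(g)$; $MA(G,\sigma)$ is the set of $\varphi$ such that $M_\varphi$ is bounded in operator norm, and then $M_\varphi$ denotes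 its bounded extension to $C^*_r(G,\sigma)$. $MCF(G,\sigma)$ is the set of $\varphi:G\to\mathbb{C}$ such that $\sum_g\varphi(g)\widehat x(g)\Lambda_\sigma(g)$ converges in operator norm for every $x\in C^*_r(G,\sigma)$. *)

From Stdlib Require Import Reals List ClassicalDescription.
From Coquelicot Require Import Coquelicot.
Open Scope R_scope.

Record Grp := {
  gcar :> Type;
  gmul : gcar -> gcar -> gcar;
  ginv : gcar -> gcar;
  gone : gcar;
  gmulA : forall a b c, gmul a (gmul b c) = gmul (gmul a b) c;
  gmul1l : forall a, gmul gone a = a;
  gmul1r : forall a, gmul a gone = a;
  gmulVl : forall a, gmul (ginv a) a = gone;
  gmulVr : forall a, gmul a (ginv a) = gone
}.

Definition cocycle (G : Grp) (s : G -> G -> C) : Prop :=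
  (forall g h, Cmod (s g h) = 1) /\
  (forall g h k, Cmult (s g h) (s (gmul G g h) k) = Cmult (s h k) (s g (gmul G h k))) /\
  (forall g, s g (gone G) = RtoC 1) /\
  (forall g, s (gone G) g = RtoC 1).

(* vectors are functions G -> C; operators are maps on them; only their
   action on l^2(G) matters *)
Definition vec (G : Grp) := G -> C.
Definition op (G : Grp) := vec G -> vec G.

Definition sumC {A} (l : list A) (f : A -> C) : C :=
  fold_right (fun a acc => Cplus (f a) acc) (RtoC 0) l.
Definition sumR {A} (l : list A) (f : A -> R) : R :=
  fold_right (fun a acc => f a + acc) 0 l.

Definition l2bounded {G : Grp} (xi : vec G) (B : R) : Prop :=
  forall l : list G, NoDup l -> sumR l (fun g => (Cmod (xi g))^2) <= B.

Definition opnorm_le {G : Grp} (T : op G) (c : R) : Prop :=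
  0 <= c /\ forall (xi : vec G) (B : R), l2bounded xi B -> l2bounded (T xi) (c^2 * B).

Definition opsub {G : Grp} (T S : op G) : op G := fun xi h => Cminus (T xi h) (S xi h).

Definition opdist_lt {G : Grp} (T S : op G) (eps : R) : Prop :=
  exists c, c < eps /\ opnorm_le (opsub T S) c.

Definition Lam (G : Grp) (s : G -> G -> C) (g : G) : op G :=
  fun xi h => Cmult (s g (gmul G (ginv G g) h)) (xi (gmul G (ginv G g) h)).

(* element  sum_{(g,c) in a} c Lambda_sigma(g)  of C(G,sigma) *)
Definition lam (G : Grp) (s : G -> G -> C) (a : list (G * C)) : op G :=
  fun xi h => sumC a (fun p => Cmult (snd p) (Lam G s (fst p) xi h)).

Definition psum (G : Grp) (s : G -> G -> C) (F : list G) (f : G -> C) : op G :=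
  fun xi h => sumC F (fun g => Cmult (f g) (Lam G s g xi h)).

(* x in C*_r(G,sigma): operator-norm limit of elements of C(G,sigma) *)
Definition InCr (G : Grp) (s : G -> G -> C) (x : op G) : Prop :=
  forall eps, 0 < eps -> exists a, opdist_lt x (lam G s a) eps.

Definition delta_e (G : Grp) : vec G :=
  fun h => if excluded_middle_informative (h = gone G) then RtoC 1 else RtoC 0.

Definition hat {G : Grp} (x : op G) : vec G := x (delta_e G).

Definition series_conv_to (G : Grp) (s : G -> G -> C) (f : G -> C) (y : op G) : Prop :=
  forall eps, 0 < eps -> exists F0 : list G, forall F : list G,
    NoDup F -> incl F0 F -> opdist_lt (psum G s F f) y eps.

Definition series_conv (G : Grp) (s : G -> G -> C) (f : G -> C) : Prop :=
  exists y : op G, series_conv_to G s f y.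

Definition InCF (G : Grp) (s : G -> G -> C) (x : op G) : Prop :=
  InCr G s x /\ series_conv G s (hat x).

Definition InMA (G : Grp) (s : G -> G -> C) (phi : G -> C) : Prop :=
  exists K : R, forall (a : list (G * C)) (c : R),
    opnorm_le (lam G s a) c ->
    opnorm_le (lam G s (map (fun p => (fst p, Cmult (phi (fst p)) (snd p))) a)) (K * c).

(* y = M_phi(x), the value at x of the (unique) continuous extension of M_phi
   from C(G,sigma) to C*_r(G,sigma) *)
Definition Mval (G : Grp) (s : G -> G -> C) (phi : G -> C) (x y : op G) : Prop :=
  forall eps, 0 < eps -> exists delta, 0 < delta /\ forall a : list (G * C),
    opdist_lt (lam G s a) x delta ->
    opdist_lt (lam G s (map (fun p => (fst p, Cmult (phi (fst p)) (snd p))) a)) y eps.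

Definition InMCF (G : Grp) (s : G -> G -> C) (phi : G -> C) : Prop :=
  forall x : op G, InCr G s x -> series_conv G s (fun g => Cmult (phi g) (hat x g)).

From Stdlib Require Import Reals List Lra ClassicalDescription Classical FunctionalExtensionality.
From Stdlib Require ClassicalEpsilon.
From Coquelicot Require Import Coquelicot.
Open Scope R_scope.

(* The heart of the matter is a uniform boundedness principle: for [phi] in MCF the truncated
   multipliers [w |-> sum_(g in F) phi g * hat w g * Lam g] are bounded uniformly in [F].
   Otherwise a gliding hump [x = sum_k t_k a_k], with [t_k] decreasing fast and each [a_k] of
   norm at most 1 making the truncation over some [F_k] large, lies in [C*_r(G, sigma)] while
   the partial sums of its multiplied series are unbounded, so that series cannot converge.
   On the twisted group algebra the truncation over any [F] containing the support is exactly
   [M_phi], so the uniform bound gives MCF in MA, and by density the multiplied series of every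
   [x] converges to [M_phi x].  Conversely the Fourier coefficients of [M_phi x] are
   [phi g * hat x g], so convergence of the Fourier series of [M_phi x] is convergence of the
   multiplied series of [x]. *)

Section ListSums.
Context {A : Type}.
Implicit Types (l : list A) (f g : A -> R) (u v : A -> C).

Lemma sumR_cons (a : A) l f : sumR (a :: l) f = f a + sumR l f.
Proof. reflexivity. Qed.

Lemma sumR_ext l f g : (forall x, In x l -> f x = g x) -> sumR l f = sumR l g.
Proof. induction l; simpl; intros H; [lra|rewrite H, IHl; auto]. Qed.

Lemma sumC_ext l u v : (forall x, In x l -> u x = v x) -> sumC l u = sumC l v.
Proof. induction l; simpl; intros H; [auto|rewrite H, IHl; auto]. Qed.

Lemma sumR_le l f g : (forall x, In x l -> f x <= g x) -> sumR l f <= sumR l g.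
Proof. induction l; simpl; intros H; [lra|apply Rplus_le_compat; auto]. Qed.

Lemma sumR_nonneg l f : (forall x, In x l -> 0 <= f x) -> 0 <= sumR l f.
Proof. induction l; simpl; intros H; [lra|apply Rplus_le_le_0_compat; auto]. Qed.

Lemma sumR_scal l f c : sumR l (fun x => c * f x) = c * sumR l f.
Proof. induction l; simpl; [ring|rewrite IHl; ring]. Qed.

Lemma sumR_plus l f g : sumR l (fun x => f x + g x) = sumR l f + sumR l g.
Proof. induction l; simpl; [ring|rewrite IHl; ring]. Qed.

Lemma sumC_app l1 l2 u : sumC (l1 ++ l2) u = Cplus (sumC l1 u) (sumC l2 u).
Proof. induction l1; simpl; [ring|rewrite IHl1; ring]. Qed.

Lemma sumC_scal l u z : sumC l (fun x => Cmult z (u x)) = Cmult z (sumC l u).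
Proof. induction l; simpl; [ring|rewrite IHl; ring]. Qed.

Lemma sumC_plus l u v : sumC l (fun x => Cplus (u x) (v x)) = Cplus (sumC l u) (sumC l v).
Proof. induction l; simpl; [ring|rewrite IHl; ring]. Qed.

Lemma sumC_0 l : sumC l (fun _ => RtoC 0) = RtoC 0.
Proof. induction l; simpl; [auto|rewrite IHl; ring]. Qed.

Lemma sumR_filter_le l (p : A -> bool) f :
  (forall x, In x l -> 0 <= f x) -> sumR (filter p l) f <= sumR l f.
Proof.
  induction l as [|a l IH]; simpl; intros H; [lra|].
  assert (0 <= f a) by auto. specialize (IH (fun x Hx => H x (or_intror Hx))).
  destruct (p a); simpl; lra.
Qed.

Lemma sumC_filter l (p : A -> bool) u :
  sumC (filter p l) u = sumC l (fun x => if p x then u x else RtoC 0).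
Proof. induction l; simpl; auto. destruct (p a); simpl; rewrite IHl; auto; ring. Qed.

Lemma sumC_indicator l (x : A) u : NoDup l ->
  sumC l (fun y => if excluded_middle_informative (x = y) then u y else RtoC 0) =
  if excluded_middle_informative (In x l) then u x else RtoC 0.
Proof.
  induction l as [|a l IH]; simpl; intros Hl.
  - destruct (excluded_middle_informative False); tauto.
  - inversion Hl; subst. rewrite IH by auto.
    destruct (excluded_middle_informative (x = a)), (excluded_middle_informative (In x l)),
      (excluded_middle_informative (a = x \/ In x l)); subst; try tauto; try ring.
    exfalso; intuition congruence.
Qed.

End ListSums.

Lemma sumR_map {A B} (l : list A) (h : A -> B) f : sumR (map h l) f = sumR l (fun x => f (h x)).
Proof. induction l; simpl; auto. rewrite IHl; auto. Qed.

Lemma sumC_map {A B} (l : list A) (h : A -> B) u : sumC (map h l) u = sumC l (fun x => u (h x)).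
Proof. induction l; simpl; auto. rewrite IHl; auto. Qed.

Lemma sumC_comm {A B} (l1 : list A) (l2 : list B) u :
  sumC l1 (fun a => sumC l2 (fun b => u a b)) = sumC l2 (fun b => sumC l1 (fun a => u a b)).
Proof. induction l1; simpl; [rewrite sumC_0; auto|rewrite IHl1, <- sumC_plus; auto]. Qed.

Lemma Cmod_ge0 (z : C) : 0 <= Cmod z.
Proof. apply sqrt_pos. Qed.

Lemma Cmod_RtoC_nonneg (r : R) : 0 <= r -> Cmod (RtoC r) = r.
Proof. intros. rewrite Cmod_R, Rabs_pos_eq; auto. Qed.

Lemma Cmod_m1 : Cmod (RtoC (-1)) = 1.
Proof. rewrite Cmod_R, Rabs_left by lra. ring. Qed.

Lemma Rmult_le_of_le_div_succ (K c e : R) : 0 <= K -> 0 <= c -> c <= e / (K + 1) -> K * c <= e.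
Proof.
  intros HK Hc Hce. apply Rmult_le_compat_l with (r := K + 1) in Hce; [|lra].
  replace ((K + 1) * (e / (K + 1))) with e in Hce by (field; lra). nra.
Qed.

Lemma exists_inv_succ_lt (c eps : R) : 0 < eps -> exists N : nat, c * / (INR N + 1) < eps.
Proof.
  intros Heps. destruct (INR_archimed eps (Rabs c) Heps) as [N HN]. exists N.
  pose proof (pos_INR N). apply Rmult_lt_reg_r with (INR N + 1); [lra|].
  rewrite Rmult_assoc, Rinv_l by lra. pose proof (Rle_abs c). nra.
Qed.

Definition op0 {G : Grp} : op G := fun _ _ => RtoC 0.
Definition opadd {G : Grp} (T U : op G) : op G := fun xi h => Cplus (T xi h) (U xi h).
Definition opscal {G : Grp} (z : C) (T : op G) : op G := fun xi h => Cmult z (T xi h).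

Lemma op_ext {G : Grp} (T U : op G) : (forall xi h, T xi h = U xi h) -> T = U.
Proof. intros H. do 2 (apply functional_extensionality; intro). auto. Qed.

Ltac op_ring :=
  apply op_ext; intros; unfold op0, opadd, opsub, opscal;
  apply injective_projections; simpl; ring.

Lemma Rsq_le_of_le_plus_eps (S c B : R) : 0 <= c -> 0 <= B ->
  (forall e, 0 < e -> S <= (c + e) ^ 2 * B) -> S <= c ^ 2 * B.
Proof.
  intros Hc HB H. apply Rle_plus_epsilon. intros eps Heps.
  set (e := Rmin 1 (eps / ((2 * c + 1) * B + 1))).
  assert (He : 0 < e) by (apply Rmin_pos; [lra|apply Rdiv_lt_0_compat; nra]).
  assert ((2 * c + 1) * B * e <= eps).
  { apply Rmult_le_of_le_div_succ; [nra|lra|apply Rmin_r]. }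
  assert (e <= 1) by apply Rmin_l.
  specialize (H e He). nra.
Qed.

Section OperatorNorm.
Context {G : Grp}.
Implicit Types (T U V : op G) (xi : vec G).

Lemma l2bounded_nonneg xi B : l2bounded xi B -> 0 <= B.
Proof. intros H. apply (H nil (NoDup_nil _)). Qed.

Lemma opnorm_le_nonneg T c : opnorm_le T c -> 0 <= c.
Proof. intros [H _]; auto. Qed.

Lemma opnorm_le_weaken T c d : opnorm_le T c -> c <= d -> opnorm_le T d.
Proof.
  intros [Hc H] Hcd. split; [lra|]. intros xi B HB l Hl.
  eapply Rle_trans; [apply (H xi B HB l Hl)|].
  apply Rmult_le_compat_r; [eapply l2bounded_nonneg; eauto|apply pow_incr; lra].
Qed.

Lemma opnorm_le_scal T z c : opnorm_le T c -> opnorm_le (opscal z T) (Cmod z * c).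
Proof.
  intros [Hc H]. split; [apply Rmult_le_pos; auto; apply Cmod_ge0|].
  intros xi B HB l Hl. unfold opscal.
  rewrite (sumR_ext _ _ (fun h => Cmod z ^ 2 * Cmod (T xi h) ^ 2))
    by (intros; rewrite Cmod_mult; ring).
  rewrite sumR_scal. replace ((Cmod z * c) ^ 2 * B) with (Cmod z ^ 2 * (c ^ 2 * B)) by ring.
  apply Rmult_le_compat_l; [apply pow_le, Cmod_ge0|apply (H xi B HB l Hl)].
Qed.

Lemma opnorm_le_of_approx T c :
  0 <= c -> (forall e, 0 < e -> opnorm_le T (c + e)) -> opnorm_le T c.
Proof.
  intros Hc H. split; auto. intros xi B HB l Hl.
  apply Rsq_le_of_le_plus_eps; auto; [eapply l2bounded_nonneg; eauto|].
  intros e He. apply (H e He); auto.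
Qed.

(* The weights [(a+b)/a] and [(a+b)/b] make [(x+y)^2] split without Cauchy-Schwarz. *)
Lemma Rsq_plus_le_weighted (a b x y : R) : 0 < a -> 0 < b ->
  (x + y) ^ 2 <= (a + b) / a * x ^ 2 + (a + b) / b * y ^ 2.
Proof.
  intros Ha Hb.
  replace ((a + b) / a * x ^ 2 + (a + b) / b * y ^ 2)
    with ((x + y) ^ 2 + (b * x - a * y) ^ 2 / (a * b)) by (field; lra).
  assert (0 <= (b * x - a * y) ^ 2 / (a * b)).
  { apply Rdiv_le_0_compat; [apply pow2_ge_0|nra]. }
  lra.
Qed.

Lemma opnorm_le_add_pos T U a b : 0 < a -> 0 < b ->
  opnorm_le T a -> opnorm_le U b -> opnorm_le (opadd T U) (a + b).
Proof.
  intros Ha Hb [_ HT] [_ HU]. split; [lra|]. intros xi B HB l Hl. unfold opadd.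
  eapply Rle_trans.
  { apply (sumR_le _ _ (fun h => (a + b) / a * Cmod (T xi h) ^ 2 + (a + b) / b * Cmod (U xi h) ^ 2)).
    intros h _. eapply Rle_trans.
    - apply pow_incr. split; [apply Cmod_ge0|apply Cmod_triangle].
    - apply Rsq_plus_le_weighted; auto. }
  rewrite sumR_plus, !sumR_scal.
  specialize (HT xi B HB l Hl). specialize (HU xi B HB l Hl).
  assert (0 < (a + b) / a) by (apply Rdiv_lt_0_compat; lra).
  assert (0 < (a + b) / b) by (apply Rdiv_lt_0_compat; lra).
  eapply Rle_trans.
  - apply Rplus_le_compat; apply Rmult_le_compat_l; try lra; eauto.
  - right. field. lra.
Qed.

Lemma opnorm_le_add T U a b : opnorm_le T a -> opnorm_le U b -> opnorm_le (opadd T U) (a + b).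
Proof.
  intros HT HU. pose proof (opnorm_le_nonneg _ _ HT). pose proof (opnorm_le_nonneg _ _ HU).
  apply opnorm_le_of_approx; [lra|]. intros e He.
  replace (a + b + e) with ((a + e / 2) + (b + e / 2)) by field.
  apply opnorm_le_add_pos; try lra; eapply opnorm_le_weaken; eauto; lra.
Qed.

Lemma opnorm_le_sub T U a b : opnorm_le T a -> opnorm_le U b -> opnorm_le (opsub T U) (a + b).
Proof.
  intros HT HU. replace (opsub T U) with (opadd T (opscal (RtoC (-1)) U)) by op_ring.
  apply opnorm_le_add; auto. rewrite <- (Rmult_1_l b), <- Cmod_m1. apply opnorm_le_scal; auto.
Qed.

Lemma opnorm_le_0 : opnorm_le (@op0 G) 0.
Proof.
  split; [lra|]. intros xi B HB l Hl. unfold op0.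
  rewrite (sumR_ext _ _ (fun _ => 0)) by (intros; rewrite Cmod_R, Rabs_R0; ring).
  replace (0 ^ 2 * B) with 0 by ring. clear. induction l; simpl; lra.
Qed.

Lemma opnorm_le_sub_trans T U V a b :
  opnorm_le (opsub T U) a -> opnorm_le (opsub U V) b -> opnorm_le (opsub T V) (a + b).
Proof.
  intros H1 H2. replace (opsub T V) with (opadd (opsub T U) (opsub U V)) by op_ring.
  apply opnorm_le_add; auto.
Qed.

Lemma opnorm_le_sub_sym T U a : opnorm_le (opsub T U) a -> opnorm_le (opsub U T) a.
Proof.
  intros H. replace (opsub U T) with (opscal (RtoC (-1)) (opsub T U)) by op_ring.
  rewrite <- (Rmult_1_l a), <- Cmod_m1. apply opnorm_le_scal; auto.
Qed.

Lemma opnorm_le_apply T c xi B h :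
  opnorm_le T c -> l2bounded xi B -> Cmod (T xi h) <= c * sqrt B.
Proof.
  intros [Hc H] HB. pose proof (l2bounded_nonneg _ _ HB).
  assert (Hh : NoDup (h :: nil)) by (constructor; [simpl; tauto|constructor]).
  specialize (H _ _ HB _ Hh). simpl in H.
  apply Rsqr_incr_0_var; [|apply Rmult_le_pos; auto; apply sqrt_pos].
  unfold Rsqr. rewrite Rmult_assoc, (Rmult_comm (sqrt B)), Rmult_assoc, sqrt_sqrt by auto. nra.
Qed.

Lemma delta_e_gone : delta_e G (gone G) = RtoC 1.
Proof. unfold delta_e. destruct (excluded_middle_informative _); tauto. Qed.

Lemma delta_e_neq g : g <> gone G -> delta_e G g = RtoC 0.
Proof. intros. unfold delta_e. destruct (excluded_middle_informative _); tauto. Qed.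

Lemma delta_e_l2bounded : l2bounded (delta_e G) 1.
Proof.
  assert (Hout : forall l, ~ In (gone G) l -> sumR l (fun g => Cmod (delta_e G g) ^ 2) = 0).
  { induction l as [|a l IH]; intros Hn; auto. simpl in Hn. rewrite sumR_cons.
    rewrite delta_e_neq, IH, Cmod_R, Rabs_R0 by tauto. ring. }
  intros l. induction l as [|a l IH]; intros Hl; [simpl; lra|]. inversion Hl; subst. rewrite sumR_cons.
  destruct (classic (a = gone G)) as [->|Ha].
  - rewrite Hout, delta_e_gone, Cmod_R, Rabs_R1 by auto. lra.
  - rewrite delta_e_neq, Cmod_R, Rabs_R0 by auto. specialize (IH H2). lra.
Qed.

Lemma hat_opsub T U g : hat (opsub T U) g = Cminus (hat T g) (hat U g).
Proof. reflexivity. Qed.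

Lemma hat_le_opnorm T c g : opnorm_le T c -> Cmod (hat T g) <= c.
Proof.
  intros HT. unfold hat. rewrite <- (Rmult_1_r c), <- sqrt_1.
  apply (opnorm_le_apply _ _ _ _ _ HT delta_e_l2bounded).
Qed.

End OperatorNorm.

Lemma Cmod_sq (z : C) : Cmod z ^ 2 = fst z * fst z + snd z * snd z.
Proof.
  unfold Cmod. rewrite pow2_sqrt; [ring|].
  pose proof (pow2_ge_0 (fst z)); pose proof (pow2_ge_0 (snd z)); lra.
Qed.

Definition Clim (u : nat -> C) : C :=
  (real (Lim_seq (fun m => fst (u m))), real (Lim_seq (fun m => snd (u m)))).

Lemma is_lim_seq_real_Lim (u : nat -> R) : ex_lim_seq_cauchy u -> is_lim_seq u (real (Lim_seq u)).
Proof.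
  intros Hu. apply ex_lim_seq_cauchy_corr in Hu as [l Hl].
  rewrite (is_lim_seq_unique _ _ Hl). auto.
Qed.

Lemma Rabs_fst_le_Cmod (z : C) : Rabs (fst z) <= Cmod z.
Proof. eapply Rle_trans; [apply Rmax_l|apply Rmax_Cmod]. Qed.

Lemma Rabs_snd_le_Cmod (z : C) : Rabs (snd z) <= Cmod z.
Proof. eapply Rle_trans; [apply Rmax_r|apply Rmax_Cmod]. Qed.

Lemma Clim_cauchy (u : nat -> C) :
  (forall eps, 0 < eps -> exists N, forall m k, (N <= m)%nat -> (N <= k)%nat ->
     Cmod (Cminus (u m) (u k)) < eps) ->
  is_lim_seq (fun m => fst (u m)) (fst (Clim u)) /\ is_lim_seq (fun m => snd (u m)) (snd (Clim u)).
Proof.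
  intros Hu. split; apply is_lim_seq_real_Lim; intros [eps Heps];
    destruct (Hu eps Heps) as [N HN]; exists N; intros m k Hm Hk;
    specialize (HN m k Hm Hk); simpl.
  - pose proof (Rabs_fst_le_Cmod (Cminus (u m) (u k))). simpl in *. unfold Rminus. lra.
  - pose proof (Rabs_snd_le_Cmod (Cminus (u m) (u k))). simpl in *. unfold Rminus. lra.
Qed.

Lemma is_lim_seq_Cmod_sq_sub (u : nat -> C) (z w : C) :
  is_lim_seq (fun m => fst (u m)) (fst z) -> is_lim_seq (fun m => snd (u m)) (snd z) ->
  is_lim_seq (fun m => Cmod (Cminus (u m) w) ^ 2) (Cmod (Cminus z w) ^ 2).
Proof.
  intros H1 H2. rewrite Cmod_sq.
  apply is_lim_seq_ext with (fun m => (fst (u m) - fst w) * (fst (u m) - fst w)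
                                     + (snd (u m) - snd w) * (snd (u m) - snd w)).
  { intros m. rewrite Cmod_sq. simpl. ring. }
  replace (fst (Cminus z w) * fst (Cminus z w) + snd (Cminus z w) * snd (Cminus z w))
    with ((fst z - fst w) * (fst z - fst w) + (snd z - snd w) * (snd z - snd w)) by (simpl; ring).
  apply is_lim_seq_plus'; apply is_lim_seq_mult'; apply is_lim_seq_minus'; auto;
    apply is_lim_seq_const.
Qed.

Lemma is_lim_seq_sumR {A} (l : list A) (u : nat -> A -> R) (v : A -> R) :
  (forall x, is_lim_seq (fun m => u m x) (v x)) -> is_lim_seq (fun m => sumR l (u m)) (sumR l v).
Proof.
  intros H. induction l; [apply is_lim_seq_const|].
  apply (is_lim_seq_plus' (fun m => u m a) (fun m => sumR l (u m))); auto.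
Qed.

Section Completeness.
Context {G : Grp}.

Definition oplim (T : nat -> op G) : op G := fun xi h => Clim (fun m => T m xi h).

Lemma opnorm_cauchy_complete (T : nat -> op G) (e : nat -> R) :
  (forall n m, (n <= m)%nat -> opnorm_le (opsub (T m) (T n)) (e n)) ->
  (forall eps, 0 < eps -> exists N, e N < eps) ->
  forall n, opnorm_le (opsub (oplim T) (T n)) (e n).
Proof.
  intros HC He n. split; [apply (opnorm_le_nonneg _ _ (HC n n (le_n n)))|].
  intros xi B HB l Hl. pose proof (l2bounded_nonneg _ _ HB) as HB0.
  assert (Hcau : forall h eps, 0 < eps -> exists N, forall m k, (N <= m)%nat -> (N <= k)%nat ->
            Cmod (Cminus (T m xi h) (T k xi h)) < eps).
  { intros h eps Heps. pose proof (sqrt_pos B).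
    destruct (He (eps / (2 * (sqrt B + 1)))) as [N HN]; [apply Rdiv_lt_0_compat; lra|].
    exists N. intros m k Hm Hk.
    pose proof (opnorm_le_apply _ _ _ _ h (HC N m Hm) HB) as Hm'.
    pose proof (opnorm_le_apply _ _ _ _ h (opnorm_le_sub_sym _ _ _ (HC N k Hk)) HB) as Hk'.
    unfold opsub in Hm', Hk'.
    replace (Cminus (T m xi h) (T k xi h))
      with (Cplus (Cminus (T m xi h) (T N xi h)) (Cminus (T N xi h) (T k xi h))) by ring.
    eapply Rle_lt_trans; [apply Cmod_triangle|].
    pose proof (opnorm_le_nonneg _ _ (HC N N (le_n N))).
    assert (2 * e N * (sqrt B + 1) < eps).
    { apply Rmult_lt_compat_r with (r := 2 * (sqrt B + 1)) in HN; [|lra].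
      replace (eps / (2 * (sqrt B + 1)) * (2 * (sqrt B + 1))) with eps in HN by (field; lra).
      lra. }
    nra. }
  assert (HL : is_lim_seq (fun m => sumR l (fun h => Cmod (opsub (T m) (T n) xi h) ^ 2))
                          (sumR l (fun h => Cmod (opsub (oplim T) (T n) xi h) ^ 2))).
  { apply (is_lim_seq_sumR l (fun m h => Cmod (opsub (T m) (T n) xi h) ^ 2)). intros h.
    destruct (Clim_cauchy (fun m => T m xi h) (Hcau h)).
    apply is_lim_seq_Cmod_sq_sub; auto. }
  assert (Hle : Rbar_le (sumR l (fun h => Cmod (opsub (oplim T) (T n) xi h) ^ 2)) (e n ^ 2 * B)).
  { eapply is_lim_seq_le_loc; [|apply HL|apply is_lim_seq_const].
    exists n. intros m Hm. apply (HC n m Hm); auto. }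
  exact Hle.
Qed.

End Completeness.

Lemma gmul_ginv_cancel (G : Grp) (g h : G) : gmul G g (gmul G (ginv G g) h) = h.
Proof. rewrite gmulA, gmulVr, gmul1l; auto. Qed.

Lemma gmul_ginv_eq_gone (G : Grp) (k g : G) : gmul G (ginv G k) g = gone G <-> k = g.
Proof.
  split; intros H.
  - rewrite <- (gmul_ginv_cancel G k g), H, gmul1r; auto.
  - subst. apply gmulVl.
Qed.

Lemma NoDup_map_inj {A B} (f : A -> B) (l : list A) :
  (forall x y, f x = f y -> x = y) -> NoDup l -> NoDup (map f l).
Proof.
  intros Hf Hl; induction Hl; simpl; constructor; auto.
  intros Hin. apply in_map_iff in Hin as [y [Hy Hiny]]. apply Hf in Hy; subst; auto.
Qed.

Definition indc {A} (x y : A) (c : C) : C :=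
  if excluded_middle_informative (x = y) then c else RtoC 0.

Lemma indc_sym {A} (x y : A) c : indc x y c = indc y x c.
Proof.
  unfold indc. destruct (excluded_middle_informative (x = y)), (excluded_middle_informative (y = x));
    subst; tauto.
Qed.

Definition coef {G : Grp} (a : list (G * C)) (g : G) : C := sumC a (fun p => indc g (fst p) (snd p)).

Definition scale_pair {G : Grp} (z : C) (p : G * C) : G * C := (fst p, Cmult z (snd p)).

Section TwistedGroupAlgebra.
Variables (G : Grp) (s : G -> G -> C).
Hypothesis Hs : cocycle G s.

Lemma opnorm_Lam g : opnorm_le (Lam G s g) 1.
Proof.
  destruct Hs as [Hmod _]. split; [lra|]. intros xi B HB l Hl. unfold Lam.
  rewrite (sumR_ext _ _ (fun h => Cmod (xi (gmul G (ginv G g) h)) ^ 2))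
    by (intros; rewrite Cmod_mult, Hmod; ring).
  rewrite <- (sumR_map l (gmul G (ginv G g)) (fun k => Cmod (xi k) ^ 2)).
  replace (1 ^ 2 * B) with B by ring. apply HB. apply NoDup_map_inj; auto.
  intros x y E. rewrite <- (gmul_ginv_cancel G g x), E, gmul_ginv_cancel; auto.
Qed.

Lemma opnorm_psum F f : opnorm_le (psum G s F f) (sumR F (fun g => Cmod (f g))).
Proof.
  induction F as [|a F IH].
  - replace (psum G s nil f) with (@op0 G) by op_ring. apply opnorm_le_0.
  - replace (psum G s (a :: F) f) with (opadd (opscal (f a) (Lam G s a)) (psum G s F f)) by op_ring.
    rewrite sumR_cons. apply opnorm_le_add; auto.
    rewrite <- (Rmult_1_r (Cmod (f a))). apply opnorm_le_scal, opnorm_Lam.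
Qed.

Lemma opnorm_lam a : opnorm_le (lam G s a) (sumR a (fun p => Cmod (snd p))).
Proof.
  induction a as [|p a IH].
  - replace (lam G s nil) with (@op0 G) by op_ring. apply opnorm_le_0.
  - replace (lam G s (p :: a)) with (opadd (opscal (snd p) (Lam G s (fst p))) (lam G s a)) by op_ring.
    rewrite sumR_cons. apply opnorm_le_add; auto.
    rewrite <- (Rmult_1_r (Cmod (snd p))). apply opnorm_le_scal, opnorm_Lam.
Qed.

Lemma hat_Lam k g : hat (Lam G s k) g = indc g k (RtoC 1).
Proof.
  destruct Hs as [_ [_ [H1 _]]]. unfold hat, Lam, indc.
  destruct (excluded_middle_informative (g = k)) as [->|Hgk].
  - rewrite gmulVl, H1, delta_e_gone. ring.
  - rewrite delta_e_neq; [ring|]. rewrite gmul_ginv_eq_gone. auto.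
Qed.

Lemma hat_lam a g : hat (lam G s a) g = coef a g.
Proof.
  unfold hat, lam, coef. apply sumC_ext. intros p _. fold (hat (Lam G s (fst p)) g).
  rewrite hat_Lam. unfold indc. destruct (excluded_middle_informative _); ring.
Qed.

Lemma lam_app a b : lam G s (a ++ b) = opadd (lam G s a) (lam G s b).
Proof. apply op_ext; intros. apply sumC_app. Qed.

Lemma lam_scale a z : lam G s (map (scale_pair z) a) = opscal z (lam G s a).
Proof.
  apply op_ext; intros. unfold lam, opscal. rewrite sumC_map, <- sumC_scal.
  apply sumC_ext. intros; unfold scale_pair; simpl; ring.
Qed.

Lemma lam_sub a b : opsub (lam G s a) (lam G s b) = lam G s (a ++ map (scale_pair (RtoC (-1))) b).
Proof. rewrite lam_app, lam_scale. op_ring. Qed.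

Lemma psum_app F1 F2 f : psum G s (F1 ++ F2) f = opadd (psum G s F1 f) (psum G s F2 f).
Proof. apply op_ext; intros. apply sumC_app. Qed.

End TwistedGroupAlgebra.

(* [map (mult_pair phi) a] is [M_phi (lam a)], as in [InMA] and [Mval]. *)
Definition mult_pair {G : Grp} (phi : G -> C) (p : G * C) : G * C :=
  (fst p, Cmult (phi (fst p)) (snd p)).

Definition in_listb {G : Grp} (F : list G) (p : G * C) : bool :=
  if excluded_middle_informative (In (fst p) F) then true else false.

Lemma coef_mult_pair {G : Grp} (phi : G -> C) a g :
  coef (map (mult_pair phi) a) g = Cmult (phi g) (coef a g).
Proof.
  unfold coef. rewrite sumC_map, <- sumC_scal. apply sumC_ext. intros p _.
  unfold mult_pair, indc; simpl. destruct (excluded_middle_informative (g = fst p)); subst; ring.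
Qed.

Lemma map_mult_pair_sub {G : Grp} (phi : G -> C) a b z :
  map (mult_pair phi) (a ++ map (scale_pair z) b) =
  map (mult_pair phi) a ++ map (scale_pair z) (map (mult_pair phi) b).
Proof.
  rewrite map_app, !map_map. f_equal. apply map_ext. intros p.
  unfold mult_pair, scale_pair; simpl. f_equal. ring.
Qed.

Section Multiplier.
Variables (G : Grp) (s : G -> G -> C) (phi : G -> C).
Hypothesis Hs : cocycle G s.

Definition mult_psum (F : list G) (w : op G) : op G :=
  psum G s F (fun g => Cmult (phi g) (hat w g)).

Definition phi_l1 (F : list G) : R := sumR F (fun g => Cmod (phi g)).

Definition mult_l1 (a : list (G * C)) : R := sumR a (fun p => Cmod (phi (fst p)) * Cmod (snd p)).

Lemma phi_l1_nonneg F : 0 <= phi_l1 F.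
Proof. apply sumR_nonneg; intros; apply Cmod_ge0. Qed.

Lemma mult_psum_add F w v : mult_psum F (opadd w v) = opadd (mult_psum F w) (mult_psum F v).
Proof.
  apply op_ext; intros. unfold mult_psum, psum, opadd.
  rewrite <- sumC_plus. apply sumC_ext; intros. unfold hat, opadd. ring.
Qed.

Lemma mult_psum_scal F z w : mult_psum F (opscal z w) = opscal z (mult_psum F w).
Proof.
  apply op_ext; intros. unfold mult_psum, psum, opscal.
  rewrite <- sumC_scal. apply sumC_ext; intros. unfold hat, opscal. ring.
Qed.

Lemma mult_psum_sub F w v : mult_psum F (opsub w v) = opsub (mult_psum F w) (mult_psum F v).
Proof.
  replace (opsub w v) with (opadd w (opscal (RtoC (-1)) v)) by op_ring.
  rewrite mult_psum_add, mult_psum_scal. op_ring.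
Qed.

Lemma mult_psum_lam F b : NoDup F ->
  mult_psum F (lam G s b) = lam G s (map (mult_pair phi) (filter (in_listb F) b)).
Proof.
  intros HF. apply op_ext; intros xi h. unfold mult_psum, psum, lam at 2.
  rewrite sumC_map, sumC_filter.
  rewrite (sumC_ext F _ (fun g => sumC b (fun p =>
             indc (fst p) g (Cmult (Cmult (phi g) (snd p)) (Lam G s g xi h))))).
  2:{ intros g _. rewrite hat_lam by auto. unfold coef.
      rewrite <- sumC_scal, <- (Cmult_comm (Lam G s g xi h)), <- sumC_scal.
      apply sumC_ext. intros p _. rewrite (indc_sym g). unfold indc.
      destruct (excluded_middle_informative _); ring. }
  rewrite sumC_comm. apply sumC_ext. intros p _. unfold indc.
  rewrite (sumC_indicator F (fst p) (fun g => Cmult (Cmult (phi g) (snd p)) (Lam G s g xi h)) HF).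
  unfold in_listb, mult_pair; simpl. destruct (excluded_middle_informative _); auto.
Qed.

Lemma mult_psum_lam_full F a : NoDup F -> incl (map fst a) F ->
  mult_psum F (lam G s a) = lam G s (map (mult_pair phi) a).
Proof.
  intros HF Ha. rewrite mult_psum_lam by auto. rewrite forallb_filter_id; auto.
  apply forallb_forall. intros p Hp. unfold in_listb.
  destruct (excluded_middle_informative (In (fst p) F)) as [|Hn]; auto.
  exfalso; apply Hn, Ha, in_map; auto.
Qed.

Lemma opnorm_mult_psum F w c : opnorm_le w c -> opnorm_le (mult_psum F w) (phi_l1 F * c).
Proof.
  intros Hw. eapply opnorm_le_weaken; [apply opnorm_psum; auto|].
  unfold phi_l1. rewrite (Rmult_comm _ c), <- sumR_scal. apply sumR_le; intros g _.
  rewrite Cmod_mult, (Rmult_comm c). apply Rmult_le_compat_l; [apply Cmod_ge0|].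
  apply hat_le_opnorm; auto.
Qed.

Lemma opnorm_mult_psum_lam F b : NoDup F -> opnorm_le (mult_psum F (lam G s b)) (mult_l1 b).
Proof.
  intros HF. rewrite mult_psum_lam by auto. eapply opnorm_le_weaken; [apply opnorm_lam; auto|].
  rewrite sumR_map. eapply Rle_trans; [|apply sumR_filter_le with (p := in_listb F)].
  - right. apply sumR_ext; intros p _. apply Cmod_mult.
  - intros; apply Rmult_le_pos; apply Cmod_ge0.
Qed.


Lemma mult_psum_bounded_of_conv x c :
  series_conv G s (fun g => Cmult (phi g) (hat x g)) -> opnorm_le x c ->
  exists M, forall F, NoDup F -> opnorm_le (mult_psum F x) M.
Proof.
  intros [y Hy] Hx. destruct (Hy 1) as [F0 HF0]; [lra|].
  set (F1 := nodup (fun g h : G => excluded_middle_informative (g = h)) F0).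
  assert (HF1 : NoDup F1) by apply NoDup_nodup.
  assert (HF01 : incl F0 F1) by (intros g Hg; apply nodup_In; auto).
  exists (2 + 2 * phi_l1 F1 * c). intros F HF.
  (* [F ++ F'] contains [F0], so both [F ++ F'] and [F1] give partial sums close to [y]. *)
  set (F' := filter (fun g => if excluded_middle_informative (In g F) then false else true) F1).
  assert (HFF' : NoDup (F ++ F')).
  { apply NoDup_app; auto; [apply NoDup_filter; auto|]. intros g Hg Hg'.
    apply filter_In in Hg' as [_ Hb]. destruct (excluded_middle_informative (In g F)); easy. }
  assert (HF0F' : incl F0 (F ++ F')).
  { intros g Hg. apply in_or_app. destruct (classic (In g F)); auto. right. apply filter_In.
    split; auto. destruct (excluded_middle_informative (In g F)); tauto. }
  destruct (HF0 _ HFF' HF0F') as [c1 [Hc1 N1]]. destruct (HF0 _ HF1 HF01) as [c2 [Hc2 N2]].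
  replace (mult_psum F x)
    with (opsub (opadd (opsub (opsub (mult_psum (F ++ F') x) y) (opsub (mult_psum F1 x) y))
                       (mult_psum F1 x))
                (mult_psum F' x)).
  2:{ unfold mult_psum. rewrite psum_app. op_ring. }
  pose proof (opnorm_le_nonneg _ _ Hx).
  assert (phi_l1 F' <= phi_l1 F1) by (apply sumR_filter_le; intros; apply Cmod_ge0).
  pose proof (phi_l1_nonneg F').
  eapply opnorm_le_weaken.
  - apply opnorm_le_sub; [apply opnorm_le_add; [apply opnorm_le_sub|]|];
      [apply N1|apply N2|apply opnorm_mult_psum, Hx|apply opnorm_mult_psum, Hx].
  - nra.
Qed.

Lemma mult_psum_bound_of_unit_ball K : 0 <= K ->
  (forall F a, NoDup F -> opnorm_le (lam G s a) 1 -> opnorm_le (mult_psum F (lam G s a)) K) ->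
  forall F a c, NoDup F -> opnorm_le (lam G s a) c -> opnorm_le (mult_psum F (lam G s a)) (K * c).
Proof.
  intros HK H F a c HF Ha. pose proof (opnorm_le_nonneg _ _ Ha) as Hc.
  destruct (Req_dec c 0) as [->|Hc0].
  { rewrite Rmult_0_r, <- (Rmult_0_r (phi_l1 F)). apply opnorm_mult_psum; auto. }
  assert (Hunit : opnorm_le (lam G s (map (scale_pair (RtoC (/ c))) a)) 1).
  { rewrite lam_scale. replace 1 with (Cmod (RtoC (/ c)) * c).
    - apply opnorm_le_scal; auto.
    - rewrite Cmod_RtoC_nonneg; [field; auto|left; apply Rinv_0_lt_compat; lra]. }
  specialize (H F _ HF Hunit). rewrite lam_scale, mult_psum_scal in H.
  replace (mult_psum F (lam G s a))
    with (opscal (RtoC c) (opscal (RtoC (/ c)) (mult_psum F (lam G s a)))).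
  2:{ apply op_ext; intros; unfold opscal. rewrite Cmult_assoc, <- RtoC_mult, Rinv_r by auto. ring. }
  eapply opnorm_le_weaken; [apply opnorm_le_scal, H|].
  rewrite Cmod_RtoC_nonneg by lra. lra.
Qed.

Section GlidingHump.
Variable pick : R -> list G * list (G * C).
Hypothesis pick_spec : forall K,
  NoDup (fst (pick K)) /\ opnorm_le (lam G s (snd (pick K))) 1 /\
  ~ opnorm_le (mult_psum (fst (pick K)) (lam G s (snd (pick K)))) K.

(* State [(b_n, t_n, F_n)]: the next hump [a] is taken from [pick] at a threshold so large that
   even after scaling by [t_(n+1)] it dominates [b_n], and [t_(n+1)] is small enough that the tail
   of the series does not disturb the truncated multiplier on [F_n]. *)
Fixpoint hump (n : nat) : list (G * C) * R * list G :=
  match n with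
  | O => (nil, 1, nil)
  | S k => let '(b, t, F) := hump k in
           let t' := Rmin (t / 2) (/ (2 * (phi_l1 F + 1))) in
           let p := pick ((INR (S k) + mult_l1 b + 1) / t') in
           (b ++ map (scale_pair (RtoC t')) (snd p), t', fst p)
  end.

Definition hump_sum n : list (G * C) := fst (fst (hump n)).
Definition hump_weight n : R := snd (fst (hump n)).
Definition hump_support n : list G := snd (hump n).
Definition hump_threshold k : R := (INR (S k) + mult_l1 (hump_sum k) + 1) / hump_weight (S k).

Lemma hump_weight_S k :
  hump_weight (S k) = Rmin (hump_weight k / 2) (/ (2 * (phi_l1 (hump_support k) + 1))).
Proof. unfold hump_weight, hump_support; simpl. destruct (hump k) as [[b t] F]; reflexivity. Qed.

Lemma hump_sum_S k : hump_sum (S k) =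
  hump_sum k ++ map (scale_pair (RtoC (hump_weight (S k)))) (snd (pick (hump_threshold k))).
Proof.
  unfold hump_threshold. rewrite hump_weight_S.
  unfold hump_weight, hump_support, hump_sum; simpl. destruct (hump k) as [[b t] F]; reflexivity.
Qed.

Lemma hump_support_S k : hump_support (S k) = fst (pick (hump_threshold k)).
Proof.
  unfold hump_threshold. rewrite hump_weight_S.
  unfold hump_weight, hump_support, hump_sum; simpl. destruct (hump k) as [[b t] F]; reflexivity.
Qed.

Lemma hump_weight_pos n : 0 < hump_weight n.
Proof.
  induction n; [change (0 < 1); lra|]. rewrite hump_weight_S. apply Rmin_pos; [lra|].
  apply Rinv_0_lt_compat. pose proof (phi_l1_nonneg (hump_support n)). lra.
Qed.

Lemma hump_weight_S_le_half n : hump_weight (S n) <= hump_weight n / 2.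
Proof. rewrite hump_weight_S. apply Rmin_l. Qed.

Lemma hump_weight_support n : phi_l1 (hump_support n) * (2 * hump_weight (S n)) <= 1.
Proof.
  pose proof (phi_l1_nonneg (hump_support n)). pose proof (hump_weight_pos (S n)).
  assert (hump_weight (S n) <= / (2 * (phi_l1 (hump_support n) + 1))).
  { rewrite hump_weight_S. apply Rmin_r. }
  apply Rmult_le_compat_r with (r := 2 * (phi_l1 (hump_support n) + 1)) in H1; [|lra].
  rewrite Rinv_l in H1 by lra. nra.
Qed.

Lemma hump_weight_small eps : 0 < eps -> exists N, 2 * hump_weight (S N) < eps.
Proof.
  intros Heps. destruct (exists_inv_succ_lt 2 eps Heps) as [N HN]. exists N.
  assert (Hdec : forall n, hump_weight n * (INR n + 1) <= 1).
  { induction n; [change (1 * (INR 0 + 1) <= 1); simpl; lra|].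
    rewrite S_INR. pose proof (hump_weight_S_le_half n).
    pose proof (hump_weight_pos (S n)). pose proof (pos_INR n). nra. }
  specialize (Hdec (S N)). rewrite S_INR in Hdec. pose proof (pos_INR N).
  pose proof (hump_weight_pos (S N)).
  apply Rle_lt_trans with (2 * / (INR N + 1)); auto.
  apply Rmult_le_compat_l; [lra|]. apply Rmult_le_reg_r with (INR N + 1); [lra|].
  rewrite Rinv_l by lra. nra.
Qed.

Lemma hump_sum_cauchy n m : (n <= m)%nat ->
  opnorm_le (opsub (lam G s (hump_sum m)) (lam G s (hump_sum n)))
            (2 * hump_weight (S n) - 2 * hump_weight (S m)).
Proof.
  induction 1.
  - replace (opsub _ _) with (@op0 G) by op_ring. eapply opnorm_le_weaken; [apply opnorm_le_0|lra].
  - rewrite hump_sum_S, lam_app, lam_scale.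
    replace (opsub (opadd _ _) _) with
      (opadd (opsub (lam G s (hump_sum m)) (lam G s (hump_sum n)))
             (opscal (RtoC (hump_weight (S m))) (lam G s (snd (pick (hump_threshold m)))))) by op_ring.
    eapply opnorm_le_weaken.
    + apply opnorm_le_add; [apply IHle|apply opnorm_le_scal, (pick_spec (hump_threshold m))].
    + rewrite Cmod_RtoC_nonneg by (left; apply hump_weight_pos).
      pose proof (hump_weight_S_le_half (S m)). lra.
Qed.

Definition hump_limit : op G := oplim (fun n => lam G s (hump_sum n)).

Lemma hump_limit_approx n :
  opnorm_le (opsub hump_limit (lam G s (hump_sum n))) (2 * hump_weight (S n)).
Proof.
  apply (opnorm_cauchy_complete (fun n => lam G s (hump_sum n)) (fun n => 2 * hump_weight (S n))).
  - intros k m Hkm. eapply opnorm_le_weaken; [apply hump_sum_cauchy; auto|].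
    pose proof (hump_weight_pos (S m)). lra.
  - apply hump_weight_small.
Qed.

Lemma hump_limit_InCr : InCr G s hump_limit.
Proof.
  intros eps Heps. destruct (hump_weight_small eps Heps) as [N HN].
  exists (hump_sum N), (2 * hump_weight (S N)). split; auto. apply hump_limit_approx.
Qed.

Lemma hump_limit_opnorm : opnorm_le hump_limit (2 * hump_weight 1).
Proof.
  replace hump_limit with (opsub hump_limit (lam G s (hump_sum 0))) by op_ring.
  apply hump_limit_approx.
Qed.

(* On [F = F_(k+1)] the [k+1]-st hump is [t_(k+1)] times a term exceeding [hump_threshold k],
   while the rest of [hump_limit] contributes at most [M + 1 + mult_l1 (hump_sum k)]. *)
Lemma hump_limit_unbounded M : ~ (forall F, NoDup F -> opnorm_le (mult_psum F hump_limit) M).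
Proof.
  intros HM. destruct (INR_archimed 1 M) as [k Hk]; [lra|]. rewrite Rmult_1_r in Hk.
  destruct (pick_spec (hump_threshold k)) as [HF [_ Hbig]]. apply Hbig.
  rewrite <- hump_support_S in *.
  pose proof (hump_weight_pos (S k)) as Ht.
  assert (Hhump : opscal (RtoC (hump_weight (S k)))
                    (mult_psum (hump_support (S k)) (lam G s (snd (pick (hump_threshold k))))) =
    opsub (opsub (mult_psum (hump_support (S k)) hump_limit)
                 (mult_psum (hump_support (S k)) (opsub hump_limit (lam G s (hump_sum (S k))))))
          (mult_psum (hump_support (S k)) (lam G s (hump_sum k)))).
  { rewrite !mult_psum_sub, hump_sum_S, lam_app, lam_scale, mult_psum_add, mult_psum_scal. op_ring. }
  assert (Hbound : opnorm_le (opscal (RtoC (hump_weight (S k)))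
                    (mult_psum (hump_support (S k)) (lam G s (snd (pick (hump_threshold k))))))
                    (M + 1 + mult_l1 (hump_sum k))).
  { rewrite Hhump. apply opnorm_le_sub; [apply opnorm_le_sub|].
    - apply HM; auto.
    - eapply opnorm_le_weaken; [apply opnorm_mult_psum, hump_limit_approx|].
      apply hump_weight_support.
    - apply opnorm_mult_psum_lam; auto. }
  replace (mult_psum (hump_support (S k)) (lam G s (snd (pick (hump_threshold k)))))
    with (opscal (RtoC (/ hump_weight (S k))) (opscal (RtoC (hump_weight (S k)))
           (mult_psum (hump_support (S k)) (lam G s (snd (pick (hump_threshold k))))))).
  2:{ apply op_ext; intros; unfold opscal. rewrite Cmult_assoc, <- RtoC_mult, Rinv_l by lra. ring. }
  eapply opnorm_le_weaken; [apply opnorm_le_scal, Hbound|].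
  rewrite Cmod_RtoC_nonneg by (left; apply Rinv_0_lt_compat; lra).
  unfold hump_threshold, Rdiv. rewrite Rmult_comm, S_INR.
  apply Rmult_le_compat_r; [left; apply Rinv_0_lt_compat|]; lra.
Qed.

End GlidingHump.

Lemma mult_psum_uniform_bound_lam : InMCF G s phi ->
  exists K, 0 <= K /\ forall F a c, NoDup F -> opnorm_le (lam G s a) c ->
    opnorm_le (mult_psum F (lam G s a)) (K * c).
Proof.
  intros HM.
  destruct (classic (exists K, forall F a, NoDup F -> opnorm_le (lam G s a) 1 ->
                        opnorm_le (mult_psum F (lam G s a)) K)) as [[K HK]|Hunb].
  - exists (Rmax K 0). split; [apply Rmax_r|].
    apply mult_psum_bound_of_unit_ball; [apply Rmax_r|].
    intros F a HF Ha. eapply opnorm_le_weaken; [apply HK; auto|apply Rmax_l].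
  - exfalso.
    assert (Hpick : forall K, exists p : list G * list (G * C),
      NoDup (fst p) /\ opnorm_le (lam G s (snd p)) 1 /\
      ~ opnorm_le (mult_psum (fst p) (lam G s (snd p))) K).
    { intros K. apply not_all_not_ex. intros Hno. apply Hunb. exists K. intros F a HF Ha.
      apply NNPP. intros Hn. apply (Hno (F, a)). auto. }
    destruct (ClassicalEpsilon.choice _ Hpick) as [pick Hspec].
    destruct (mult_psum_bounded_of_conv _ _ (HM _ (hump_limit_InCr pick Hspec))
                (hump_limit_opnorm pick Hspec)) as [M HMb].
    exact (hump_limit_unbounded pick Hspec M HMb).
Qed.

Lemma mult_psum_uniform_bound : InMCF G s phi ->
  exists K, 0 <= K /\ forall F w c, NoDup F -> InCr G s w -> opnorm_le w c ->
    opnorm_le (mult_psum F w) (K * c).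
Proof.
  intros HM. destruct (mult_psum_uniform_bound_lam HM) as [K [HK Hlam]]. exists K. split; auto.
  intros F w c HF Hw Hc. pose proof (opnorm_le_nonneg _ _ Hc). pose proof (phi_l1_nonneg F).
  apply opnorm_le_of_approx; [nra|]. intros e He.
  destruct (Hw (e / (K + phi_l1 F + 1))) as [a [c1 [Hc1 Ha]]]; [apply Rdiv_lt_0_compat; lra|].
  pose proof (opnorm_le_nonneg _ _ Ha).
  assert (Hlam_a : opnorm_le (lam G s a) (c + c1)).
  { replace (lam G s a) with (opsub w (opsub w (lam G s a))) by op_ring.
    apply opnorm_le_sub; auto. }
  replace (mult_psum F w) with (opadd (mult_psum F (lam G s a)) (mult_psum F (opsub w (lam G s a)))).
  2:{ rewrite <- mult_psum_add. f_equal. op_ring. }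
  eapply opnorm_le_weaken; [apply opnorm_le_add; [apply Hlam|apply opnorm_mult_psum]; eauto|].
  assert ((K + phi_l1 F) * c1 <= e) by (apply Rmult_le_of_le_div_succ; lra).
  nra.
Qed.

Lemma InMCF_InMA : InMCF G s phi -> InMA G s phi.
Proof.
  intros HM. destruct (mult_psum_uniform_bound_lam HM) as [K [_ HK]]. exists K. intros a c Ha.
  set (F := nodup (fun g h : G => excluded_middle_informative (g = h)) (map fst a)).
  change (opnorm_le (lam G s (map (mult_pair phi) a)) (K * c)).
  rewrite <- (mult_psum_lam_full F a); try apply NoDup_nodup.
  - apply HK; auto. apply NoDup_nodup.
  - intros g Hg. apply nodup_In; auto.
Qed.

Lemma Mval_InCr x y : InCr G s x -> Mval G s phi x y -> InCr G s y.
Proof.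
  intros Hx HMv eps Heps. destruct (HMv eps Heps) as [d [Hd Hd']].
  destruct (Hx d Hd) as [a [c0 [Hc0 N0]]].
  destruct (Hd' a) as [c1 [Hc1 N1]]; [exists c0; split; auto; apply opnorm_le_sub_sym; auto|].
  exists (map (mult_pair phi) a), c1. split; auto. apply opnorm_le_sub_sym; auto.
Qed.

Lemma Cmod_eq_0_of_le_eps (z : C) : (forall e, 0 < e -> Cmod z <= e) -> z = RtoC 0.
Proof.
  intros H. apply Cmod_eq_0. pose proof (Cmod_ge0 z).
  destruct (Req_dec (Cmod z) 0); auto. specialize (H (Cmod z / 2)). lra.
Qed.

Lemma Mval_hat x y : InCr G s x -> Mval G s phi x y -> forall g, hat y g = Cmult (phi g) (hat x g).
Proof.
  intros Hx HMv g.
  enough (E : Cminus (hat y g) (Cmult (phi g) (hat x g)) = RtoC 0).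
  { replace (hat y g)
      with (Cplus (Cminus (hat y g) (Cmult (phi g) (hat x g))) (Cmult (phi g) (hat x g))) by ring. rewrite E. ring. }
  apply Cmod_eq_0_of_le_eps. intros e He. pose proof (Cmod_ge0 (phi g)).
  destruct (HMv (e / 2)) as [d [Hd Hd']]; [lra|].
  set (eta := Rmin d (e / 2 / (Cmod (phi g) + 1))).
  assert (Heta : 0 < eta) by (apply Rmin_pos; auto; apply Rdiv_lt_0_compat; lra).
  destruct (Hx eta Heta) as [a [c2 [Hc2 N2]]].
  destruct (Hd' a) as [c1 [Hc1 N1]].
  { exists c2. split; [eapply Rlt_le_trans; [apply Hc2|apply Rmin_l]|apply opnorm_le_sub_sym; auto]. }
  change (map _ a) with (map (mult_pair phi) a) in N1.
  pose proof (hat_le_opnorm _ _ g N1) as B1. pose proof (hat_le_opnorm _ _ g N2) as B2.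
  rewrite hat_opsub, hat_lam, coef_mult_pair in B1 by auto.
  rewrite hat_opsub, hat_lam in B2 by auto.
  assert (Cmod (phi g) * c2 <= e / 2).
  { apply Rmult_le_of_le_div_succ; [auto|eapply opnorm_le_nonneg; eauto|].
    left. eapply Rlt_le_trans; [apply Hc2|apply Rmin_r]. }
  replace (Cminus (hat y g) (Cmult (phi g) (hat x g))) with
    (Cplus (Cmult (RtoC (-1)) (Cminus (Cmult (phi g) (coef a g)) (hat y g)))
           (Cmult (phi g) (Cmult (RtoC (-1)) (Cminus (hat x g) (coef a g)))))
    by (apply injective_projections; simpl; ring).
  eapply Rle_trans; [apply Cmod_triangle|]. rewrite !Cmod_mult, !Cmod_m1.
  pose proof (Cmod_ge0 (Cminus (hat x g) (coef a g))). nra.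
Qed.

Lemma InCr_approx_seq x : InCr G s x ->
  exists a : nat -> list (G * C), forall n, opnorm_le (opsub x (lam G s (a n))) (/ (INR n + 1)).
Proof.
  intros Hx.
  apply (ClassicalEpsilon.choice (fun n a => opnorm_le (opsub x (lam G s a)) (/ (INR n + 1)))).
  intros n.
  assert (Hn : 0 < / (INR n + 1)) by (apply Rinv_0_lt_compat; pose proof (pos_INR n); lra).
  destruct (Hx _ Hn) as [a [c [Hc Ha]]]. exists a. eapply opnorm_le_weaken; eauto; lra.
Qed.

Lemma Mval_exists x : InMA G s phi -> InCr G s x -> exists y, Mval G s phi x y.
Proof.
  intros [K HK] Hx. change (forall a c, opnorm_le (lam G s a) c ->
    opnorm_le (lam G s (map (mult_pair phi) a)) (K * c)) in HK.
  assert (HK0 : 0 <= K).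
  { assert (H1 : opnorm_le (lam G s nil) 1).
    { replace (lam G s nil) with (@op0 G) by op_ring.
      eapply opnorm_le_weaken; [apply opnorm_le_0|lra]. }
    pose proof (opnorm_le_nonneg _ _ (HK nil 1 H1)). lra. }
  destruct (InCr_approx_seq x Hx) as [an Han].
  assert (Hdiff : forall a n c, opnorm_le (opsub (lam G s a) x) c ->
            opnorm_le (opsub (lam G s (map (mult_pair phi) a)) (lam G s (map (mult_pair phi) (an n))))
                      (K * (c + / (INR n + 1)))).
  { intros a n c Hc. rewrite lam_sub, <- map_mult_pair_sub. apply HK.
    rewrite <- lam_sub. eapply opnorm_le_sub_trans; eauto. }
  set (T n := lam G s (map (mult_pair phi) (an n))).
  assert (Hinv : forall n m, (n <= m)%nat -> / (INR m + 1) <= / (INR n + 1)).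
  { intros n m Hnm. apply le_INR in Hnm. pose proof (pos_INR n). apply Rinv_le_contravar; lra. }
  assert (Hy : forall n, opnorm_le (opsub (oplim T) (T n)) (2 * K * / (INR n + 1))).
  { apply opnorm_cauchy_complete.
    - intros n m Hnm. eapply opnorm_le_weaken; [apply Hdiff, opnorm_le_sub_sym, Han|].
      specialize (Hinv n m Hnm). nra.
    - intros eps Heps. apply exists_inv_succ_lt; auto. }
  exists (oplim T). intros eps Heps.
  destruct (exists_inv_succ_lt (3 * K) (eps / 2)) as [n Hn]; [lra|].
  exists (eps / 2 / (K + 1)). split; [apply Rdiv_lt_0_compat; lra|].
  intros a [c1 [Hc1 N1]].
  exists (K * (c1 + / (INR n + 1)) + 2 * K * / (INR n + 1)). split.
  - assert (K * c1 <= eps / 2).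
    { apply Rmult_le_of_le_div_succ; [auto|eapply opnorm_le_nonneg; eauto|lra]. }
    lra.
  - eapply opnorm_le_sub_trans; [apply Hdiff; eauto|apply opnorm_le_sub_sym, Hy].
Qed.

Lemma InCr_sub_lam x b : InCr G s x -> InCr G s (opsub x (lam G s b)).
Proof.
  intros Hx eps Heps. destruct (Hx eps Heps) as [a [c [Hc Hac]]].
  exists (a ++ map (scale_pair (RtoC (-1))) b), c. split; auto.
  rewrite <- lam_sub.
  replace (opsub (opsub x (lam G s b)) (opsub (lam G s a) (lam G s b))) with (opsub x (lam G s a))
    by op_ring.
  auto.
Qed.

(* Approximate [x] by some [lam a]; once [F] contains the support of [a], the truncation of
   [lam a] is exactly [M_phi (lam a)], and the truncation of the rest is uniformly small. *)
Lemma Mval_series_conv_to x y : InMCF G s phi -> InCr G s x -> Mval G s phi x y ->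
  series_conv_to G s (fun g => Cmult (phi g) (hat x g)) y.
Proof.
  intros HM Hx HMv. destruct (mult_psum_uniform_bound HM) as [K [HK Hunif]].
  intros eps Heps. destruct (HMv (eps / 2)) as [d [Hd Hd']]; [lra|].
  set (eta := Rmin d (eps / 4 / (K + 1))).
  assert (Heta : 0 < eta) by (apply Rmin_pos; auto; apply Rdiv_lt_0_compat; lra).
  destruct (Hx eta Heta) as [a [c0 [Hc0 N0]]].
  destruct (Hd' a) as [c1 [Hc1 N1]].
  { exists c0. split; [eapply Rlt_le_trans; [apply Hc0|apply Rmin_l]|apply opnorm_le_sub_sym; auto]. }
  change (map _ a) with (map (mult_pair phi) a) in N1.
  exists (map fst a). intros F HF Ha.
  change (psum G s F _) with (mult_psum F x).
  exists (c1 + K * c0). split.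
  - assert (K * c0 <= eps / 4).
    { apply Rmult_le_of_le_div_succ; [auto|eapply opnorm_le_nonneg; eauto|].
      left. eapply Rlt_le_trans; [apply Hc0|apply Rmin_r]. }
    lra.
  - replace (opsub (mult_psum F x) y)
      with (opadd (opsub (mult_psum F (lam G s a)) y) (mult_psum F (opsub x (lam G s a))))
      by (rewrite mult_psum_sub; op_ring).
    rewrite mult_psum_lam_full by auto.
    apply opnorm_le_add; auto. apply Hunif; auto. apply InCr_sub_lam; auto.
Qed.

End Multiplier.

Theorem proposition4p7 (G : Grp) (s : G -> G -> C) (Hs : cocycle G s) :
  (forall phi : G -> C, InMCF G s phi -> InMA G s phi) /\
  (forall phi : G -> C,
     InMCF G s phi <->
     (InMA G s phi /\
      forall x y : op G, InCr G s x -> Mval G s phi x y -> InCF G s y)) /\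
  (forall phi : G -> C, InMCF G s phi ->
     forall x : op G, InCr G s x ->
       (exists y : op G, Mval G s phi x y) /\
       (forall y : op G, Mval G s phi x y ->
          series_conv_to G s (fun g => Cmult (phi g) (hat x g)) y)).
Proof.
  assert (Hhat : forall phi x y, InCr G s x -> Mval G s phi x y ->
            hat y = (fun g => Cmult (phi g) (hat x g))).
  { intros phi x y Hx HMv. apply functional_extensionality. apply (Mval_hat G s phi Hs); auto. }
  split; [|split].
  - intros phi. apply InMCF_InMA, Hs.
  - intros phi. split.
    + intros HM. split; [apply InMCF_InMA; auto|]. intros x y Hx HMv. split.
      * apply (Mval_InCr G s phi x); auto.
      * exists y. rewrite (Hhat phi x y) by auto. apply Mval_series_conv_to; auto.
    + intros [HMA HCF] x Hx. destruct (Mval_exists G s phi x HMA Hx) as [y HMv].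
      destruct (HCF x y Hx HMv) as [_ Hconv]. rewrite <- (Hhat phi x y); auto.
  - intros phi HM x Hx. split.
    + apply Mval_exists; auto. apply InMCF_InMA; auto.
    + intros y HMv. apply Mval_series_conv_to; auto.
Qed.
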